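(* For every integer $k\geq 6$, \[ H^+(k+1,k) = \{ 2^{k-1} + 2^{k-5} + 2^{k-6},\ 2^{k-1} + 2^{k-3},\ 2^{k-1} + 2^{k-2},\ 2^{k}\}.\]
   Context: Let $\mathbb{H}^n=\{0,1\}^n\subseteq\mathbb{R}^n$. For $n\geq k$, $H(n,k)=\{\,|\mathbb{H}^k\cap L^{-1}(\mathbb{H}^{n-k})| : L:\mathbb{R}^k\to\mathbb{R}^{n-k}\text{ linear}\,\}$ (equivalently, the set of possible sizes of intersections of a $k$-dimensional linear subspace of $\mathbb{R}^n$ with $\mathbb{H}^n$), and $H^+(n,k)=H(n,k)\setminus\{1,\dots,2^{k-1}\}$. *)

From HB Require Import structures.
From mathcomp Require Import all_boot all_order all_algebra.
From mathcomp Require Import Rstruct.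

Set Implicit Arguments.
Unset Strict Implicit.
Unset Printing Implicit Defensive.

Import Order.TTheory GRing.Theory Num.Theory.
Local Open Scope ring_scope.

Definition cube_pt (k : nat) (b : {ffun 'I_k -> bool}) : 'rV[Rdefinitions.R]_k :=
  \row_i (b i)%:R.

(* |H^k ∩ L^{-1}(H^(n-k))| for a linear map L : R^k -> R^(n-k), given by the
   matrix L acting on row vectors (x |-> x *m L). *)
Definition cube_preimage_card (k m : nat) (L : 'M[Rdefinitions.R]_(k, m)) : nat :=
  #|[set b : {ffun 'I_k -> bool} |
      [forall j : 'I_m, ((cube_pt b *m L) 0 j == 0) || ((cube_pt b *m L) 0 j == 1)]]|.

Definition Hset (n k : nat) (s : nat) : Prop :=
  exists L : 'M[Rdefinitions.R]_(k, n - k), s = cube_preimage_card L.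

Definition Hplus (n k : nat) (s : nat) : Prop :=
  Hset n k s /\ ~ (1 <= s <= 2 ^ (k - 1))%N.

(* A linear map R^k -> R is a coefficient vector c, and we count the 0/1
   vectors b with c.b in {0, 1}.  If some c_i is not in {0, 1, -1}, flipping
   b_i sends solutions to non-solutions, so there are at most 2^(k-1) of them.
   Otherwise, if c has t nonzero entries of which q equal -1, complementing b
   on the negative coordinates turns the condition into "b meets the support
   of c in q or q+1 points", which gives C(t+1, q+1) * 2^(k-t) solutions.
   This exceeds 2^(k-1) only when t <= 7, and a finite check of these cases
   leaves exactly four values. *)

From HB Require Import structures.
From mathcomp Require Import all_boot all_order all_algebra.
From mathcomp Require Import Rstruct ring zify.

Set Implicit Arguments.
Unset Strict Implicit.
Unset Printing Implicit Defensive.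

Import Order.TTheory GRing.Theory Num.Theory.

Section SetTraces.

Variables (X : finType) (T : {set X}).

Lemma card_setI_draws j :
  #|[set B : {set X} | #|B :&: T| == j]| = 'C(#|T|, j) * 2 ^ #|~: T|.
Proof.
pose parts B := (B :&: T, B :&: ~: T).
have parts_inj : injective parts.
  by move=> B1 B2 [e1 e2]; rewrite -(setID B1 T) -(setID B2 T) !setDE e1 e2.
rewrite -cards_draws -card_powerset -cardsX -(card_imset _ parts_inj).
apply: eq_card => -[A C]; rewrite !inE /=.
apply/imsetP/andP => [[B] | [/andP[sAT /eqP <-] sCT]].
  by rewrite inE => /eqP <- [-> ->]; rewrite !subsetIr eqxx.
have AT : A :&: ~: T = set0 by apply: disjoint_setI0; rewrite disjoints_subset setCK.
have CT : C :&: T = set0 by apply: disjoint_setI0; rewrite disjoints_subset.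
exists (A :|: C); first by rewrite inE setIUl (setIidPl sAT) CT setU0.
by rewrite /parts !setIUl (setIidPl sAT) (setIidPl sCT) AT CT setU0 set0U.
Qed.

Lemma card_setI_draws2 j :
  #|[set B : {set X} | (#|B :&: T| == j) || (#|B :&: T| == j.+1)]|
    = 'C(#|T|.+1, j.+1) * 2 ^ #|~: T|.
Proof.
rewrite binS mulnDl addnC -!card_setI_draws -cardsUI.
have -> : [set B : {set X} | #|B :&: T| == j] :&: [set B | #|B :&: T| == j.+1] = set0.
  by apply/setP => B; rewrite !inE; case: eqP => // ->; rewrite eqn_leq ltnn andbF.
by rewrite cards0 addn0; apply: eq_card => B; rewrite !inE.
Qed.

End SetTraces.

Section CubeSums.

Local Open Scope ring_scope.

Variables (R : numDomainType) (I : finType) (c : I -> R).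

Definition cube_sum (b : {ffun I -> bool}) : R := \sum_i (b i)%:R * c i.

Definition cube_count01 : nat :=
  #|[set b | cube_sum b \in [:: 0; 1]]|.

Lemma mem01_diff (x y : R) :
  x \in [:: 0; 1] -> x + y \in [:: 0; 1] -> y \in [:: 0; 1; -1].
Proof.
rewrite !inE => /orP[] /eqP ->; first by rewrite add0r => /orP[] ->; rewrite ?orbT.
by move=> /orP[] /eqP /(canRL (addKr 1)) ->; rewrite ?addr0 ?addNr eqxx ?orbT.
Qed.

Lemma cube_count01_le_half i0 :
  c i0 \notin [:: 0; 1; -1] -> (cube_count01.*2 <= 2 ^ #|I|)%N.
Proof.
move=> c_i0; rewrite /cube_count01; set S := [set b | _].
pose flip (b : {ffun I -> bool}) := [ffun i => (i == i0) (+) b i].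
have flipK : involutive flip by move=> b; apply/ffunP => i; rewrite !ffunE addKb.
have sum_flip b : cube_sum (flip b) = cube_sum b + (if b i0 then - c i0 else c i0).
  rewrite /cube_sum (bigD1 i0) //= [in RHS](bigD1 i0) //= ffunE eqxx.
  rewrite (eq_bigr (fun i => (b i)%:R * c i)) => [|i /negbTE ne]; last by rewrite ffunE ne.
  by case: (b i0) => /=; ring.
have flip_out : flip @: S \subset ~: S.
  apply/subsetP => _ /imsetP[b bS ->]; rewrite in_set in bS.
  rewrite in_setC in_set sum_flip; move: c_i0; apply: contra => /(mem01_diff bS).
  by case: (b i0); rewrite // !inE oppr_eq0 eqr_opp eqr_oppLR; case/or3P => ->; rewrite ?orbT.
have := subset_leq_card flip_out; rewrite card_imset; last exact: inv_inj.
have := cardsC S; rewrite card_ffun card_bool.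
by rewrite -addnn => <-; rewrite leq_add2l.
Qed.

Lemma sumr_indicator (A : {pred I}) : \sum_i ((i \in A)%:R : R) = #|A|%:R.
Proof.
rewrite -sum1_card natr_sum [RHS]big_mkcond.
by apply: eq_bigr => i _; case: (i \in A).
Qed.

Lemma cube_count01_signs : (forall i, c i \in [:: 0; 1; -1]) ->
  cube_count01 = ('C(#|[set i | c i != 0%R]|.+1, #|[set i | c i == (-1)%R]|.+1)
                  * 2 ^ (#|I| - #|[set i | c i != 0%R]|))%N.
Proof.
move=> c_unit; set T := [set i | c i != 0]; set Q := [set i | c i == -1].
pose shift (b : {ffun I -> bool}) := [set i | b i (+) (i \in Q)].
have shift_bij : bijective shift.
  exists (fun B : {set I} => [ffun i => (i \in B) (+) (i \in Q)]) => [b|B].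
    by apply/ffunP => i; rewrite ffunE inE addbK.
  by apply/setP => i; rewrite inE ffunE addbK.
have sum_shift b : cube_sum b = #|shift b :&: T|%:R - #|Q|%:R.
  rewrite -!sumr_indicator -sumrB; apply: eq_bigr => i _; rewrite !inE.
  have := c_unit i; rewrite !inE => /or3P[] /eqP ->.
  - by rewrite eqxx andbF mulr0 eq_sym oppr_eq0 oner_eq0 subr0.
  - by rewrite eq_sym eqNr oner_eq0 addbF mulr1 /= andbT subr0.
  - by rewrite eqxx oppr_eq0 oner_eq0 andbT; case: (b i); rewrite ?mul1r ?mul0r ?subrr ?sub0r.
have -> : cube_count01
    = #|shift @^-1: [set B | (#|B :&: T| == #|Q|) || (#|B :&: T| == #|Q|.+1)]|.
  by apply: eq_card => b; rewrite !in_set sum_shift !inE subr_eq0 subr_eq nat1r !eqr_nat.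
rewrite on_card_preimset; last exact: onW_bij.
by rewrite card_setI_draws2 -(cardsC T) addKn.
Qed.

End CubeSums.

Lemma binomial_le_pow n j : 7 <= n -> 'C(n.+2, j) <= 2 ^ n.
Proof.
elim: n j => // n IHn j le7n; have [-> | ne6] := eqVneq n 6.
  have [le_j9 | /bin_small -> //] := leqP j 9.
  by case: j le_j9 => [|[|[|[|[|[|[|[|[|[|j]]]]]]]]]].
have {}le7n : 7 <= n by rewrite ltn_neqAle eq_sym ne6 -ltnS.
case: j => [|j]; first by rewrite bin0 expn_gt0.
by rewrite binS expnS mul2n -addnn leq_add ?IHn.
Qed.

(* The elements of H^+(k+1,k) are the numbers r * 2^k / 64 with r in this list. *)
Definition large_ratios := [:: 35; 40; 48; 64].

Lemma large_binomial_ratio t q : q <= t -> 2 ^ t < 'C(t.+1, q.+1) * 2 ->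
  64 * 'C(t.+1, q.+1) \in [seq r * 2 ^ t | r <- large_ratios].
Proof.
have [le8t _ | lt_t8] := leqP 8 t.
  case: t le8t => // t le7t.
  by rewrite expnS mulnC ltn_mul2r /= ltnNge binomial_le_pow.
move: q; case: t lt_t8 => [|[|[|[|[|[|[|[|t]]]]]]]] // _ [|[|[|[|[|[|[|[|q]]]]]]]] //.
all: by vm_compute.
Qed.

Lemma large_binomial_scaled k t q : q <= t -> t <= k ->
  2 ^ (k - 1) < 'C(t.+1, q.+1) * 2 ^ (k - t) ->
  64 * ('C(t.+1, q.+1) * 2 ^ (k - t)) \in [seq r * 2 ^ k | r <- large_ratios].
Proof.
move=> le_qt le_tk large.
have pow_k : 2 ^ k = 2 ^ t * 2 ^ (k - t) by rewrite -expnD subnKC.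
have : 2 ^ t * 2 ^ (k - t) < 'C(t.+1, q.+1) * 2 * 2 ^ (k - t).
  apply: (@leq_ltn_trans (2 ^ (k - 1) * 2)); last by rewrite mulnAC ltn_mul2r large.
  by rewrite -pow_k -expnSr leq_pexp2l // subn1 leqSpred.
rewrite ltn_pmul2r ?expn_gt0 // => /(large_binomial_ratio le_qt) /mapP[r r_in e].
by apply/mapP; exists r; rewrite // mulnA e pow_k mulnA.
Qed.

Lemma large_ratio_gt k s : 0 < k ->
  64 * s \in [seq r * 2 ^ k | r <- large_ratios] -> 2 ^ (k - 1) < s.
Proof.
case: k => // k _ /mapP[r r_in e].
rewrite -(ltn_pmul2l (_ : 0 < 64)) // e subn1 /= expnS mulnA ltn_mul2r expn_gt0 /=.
by move: r_in; rewrite !inE => /or4P[] /eqP ->.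
Qed.

Lemma large_ratio_targets k s : 6 <= k ->
  (s = 2 ^ (k - 1) + 2 ^ (k - 5) + 2 ^ (k - 6)
   \/ s = 2 ^ (k - 1) + 2 ^ (k - 3)
   \/ s = 2 ^ (k - 1) + 2 ^ (k - 2)
   \/ s = 2 ^ k)
  <-> 64 * s \in [seq r * 2 ^ k | r <- large_ratios].
Proof.
move=> le6k.
have pow_k a : a <= 6 -> 2 ^ (k - a) = 2 ^ (6 - a) * 2 ^ (k - 6).
  by move=> le_a6; rewrite -expnD; congr (2 ^ _); lia.
have pow_k0 : 2 ^ k = 2 ^ 6 * 2 ^ (k - 6) by rewrite -(pow_k 0) ?subn0.
rewrite pow_k0 (pow_k 1) // (pow_k 2) // (pow_k 3) // (pow_k 5) // /= !inE.
move: (2 ^ (k - 6)) => Y.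
rewrite -[2 ^ (6 - 1)]/32 -[2 ^ (6 - 5)]/2 -[2 ^ (6 - 3)]/8 -[2 ^ (6 - 2)]/16 -[2 ^ 6]/64.
clear; lia.
Qed.

Local Notation R := Rdefinitions.R.

Lemma card_ord_lt k a : a <= k -> #|[set i : 'I_k | i < a]| = a.
Proof.
move=> le_ak; have widen_inj : injective (widen_ord le_ak).
  by move=> i j /(congr1 val) /= /ord_inj.
rewrite -[RHS]card_ord -(card_imset _ widen_inj).
apply: eq_card => i; rewrite inE; apply/idP/imsetP => [lt_ia | [j _ ->]].
  by exists (Ordinal lt_ia) => //; apply: val_inj.
by rewrite /= ltn_ord.
Qed.

Section CubePreimage.

Local Open Scope ring_scope.

Lemma cube_preimage_card_gt0 k m (L : 'M[R]_(k, m)) : (0 < cube_preimage_card L)%N.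
Proof.
apply/card_gt0P; exists [ffun=> false]; rewrite inE; apply/forallP => j.
have -> : cube_pt (k := k) [ffun=> false] = 0.
  by apply/rowP => i; rewrite !mxE ffunE.
by rewrite mul0mx mxE eqxx.
Qed.

Lemma Hset_gt0 n k s : Hset n k s -> (0 < s)%N.
Proof. by case=> L ->; apply: cube_preimage_card_gt0. Qed.

(* [k.+1 - k] does not reduce to [1], so the single column index needs a cast. *)
Definition col0 k : 'I_(k.+1 - k) := cast_ord (esym (subSnn k)) ord0.

Lemma cube_preimage_card_succ k (L : 'M[R]_(k, k.+1 - k)) (c : 'I_k -> R) :
  (forall i, L i (col0 k) = c i) -> cube_preimage_card L = cube_count01 c.
Proof.
set j0 := col0 k => L_c.
have all_j0 (j : 'I_(k.+1 - k)) : j = j0.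
  apply: val_inj; case: j => -[|n] // lt_n.
  by suff : (n.+1 < 1)%N by []; rewrite -(subSnn k).
have cube_pt_mul b : (cube_pt b *m L) 0 j0 = cube_sum c b.
  by rewrite !mxE; apply: eq_bigr => i _; rewrite mxE L_c.
apply: eq_card => b; rewrite !inE.
by apply/forallP/idP => [/(_ j0) | b01 j]; rewrite ?(all_j0 j) cube_pt_mul.
Qed.

Lemma Hset_succ_binomial k t q : (q <= t)%N -> (t <= k)%N ->
  Hset k.+1 k ('C(t.+1, q.+1) * 2 ^ (k - t))%N.
Proof.
move=> le_qt le_tk.
pose c (i : 'I_k) : R := if (i < q)%N then -1 else if (i < t)%N then 1 else 0.
exists (\matrix_(i, j) c i).
rewrite (cube_preimage_card_succ (c := c)) => [|i]; last by rewrite mxE.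
have one_neq_m1 : (1 == -1 :> R) = false by rewrite eq_sym eqNr oner_eq0.
have c_unit i : c i \in [:: 0; 1; -1].
  by rewrite /c; case: ifP => _; last case: ifP => _; rewrite !inE eqxx ?orbT.
rewrite cube_count01_signs // card_ord.
have -> : [set i | c i != 0] = [set i : 'I_k | (i < t)%N].
  apply/setP => i; rewrite !inE /c; case: ifP => [lt_iq | _].
    by rewrite oppr_eq0 oner_eq0 (leq_trans lt_iq le_qt).
  by case: ifP; rewrite ?oner_eq0 ?eqxx.
have -> : [set i | c i == -1] = [set i : 'I_k | (i < q)%N].
  apply/setP => i; rewrite !inE /c; case: ifP => [|_]; first by rewrite eqxx.
  by case: ifP; rewrite ?one_neq_m1 // eq_sym oppr_eq0 oner_eq0.
by rewrite !card_ord_lt // (leq_trans le_qt).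
Qed.

Lemma Hset_succ_large k s : Hset k.+1 k s -> (2 ^ (k - 1) < s)%N ->
  exists t q, [/\ (q <= t)%N, (t <= k)%N & s = 'C(t.+1, q.+1) * 2 ^ (k - t)]%N.
Proof.
case=> L ->; pose c (i : 'I_k) : R := L i (col0 k).
rewrite (cube_preimage_card_succ (c := c)) // => large.
have [/forallP c_unit | /forallPn[i0 c_i0]] := boolP [forall i, c i \in [:: 0; 1; -1]].
  exists #|[set i | c i != 0]|, #|[set i | c i == -1]|.
  rewrite cube_count01_signs // card_ord; split=> //; last first.
    by have := max_card [set i | c i != 0]; rewrite card_ord.
  apply/subset_leq_card/subsetP => i; rewrite !inE => /eqP ->.
  by rewrite oppr_eq0 oner_eq0.
have k_gt0 : (0 < k)%N by apply: leq_ltn_trans (ltn_ord i0).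
have pow_k : (2 ^ k = (2 ^ (k - 1)).*2)%N by rewrite -mul2n -expnS subn1 prednK.
by have := cube_count01_le_half c_i0; rewrite card_ord pow_k leq_double leqNgt large.
Qed.

End CubePreimage.

Lemma large_ratio_Hset k s : 6 <= k ->
  64 * s \in [seq r * 2 ^ k | r <- large_ratios] -> Hset k.+1 k s.
Proof.
move=> le6k /mapP[r r_in e64].
have realize t q : q <= t -> t <= 6 -> 64 * 'C(t.+1, q.+1) = r * 2 ^ t -> Hset k.+1 k s.
  move=> le_qt le_t6 e; have le_tk := leq_trans le_t6 le6k.
  suff -> : s = 'C(t.+1, q.+1) * 2 ^ (k - t) by apply: Hset_succ_binomial.
  apply/eqP; rewrite -(eqn_pmul2l (_ : 0 < 64)) // e64 mulnA e -mulnA -expnD.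
  by rewrite subnKC.
move: r_in; rewrite !inE => /or4P[] /eqP r_eq.
- by apply: (realize 6 2); rewrite ?r_eq.
- by apply: (realize 4 1); rewrite ?r_eq.
- by apply: (realize 2 0); rewrite ?r_eq.
- by apply: (realize 0 0); rewrite ?r_eq.
Qed.

Theorem corollary3p3 (k : nat) (hk : (6 <= k)%N) (s : nat) :
  Hplus k.+1 k s <->
  (s = 2 ^ (k - 1) + 2 ^ (k - 5) + 2 ^ (k - 6)
   \/ s = 2 ^ (k - 1) + 2 ^ (k - 3)
   \/ s = 2 ^ (k - 1) + 2 ^ (k - 2)
   \/ s = 2 ^ k)%N.
Proof.
rewrite large_ratio_targets //; split=> [[sH s_not_small] | s_large].
  have large : 2 ^ (k - 1) < s.
    by rewrite ltnNge; apply/negP => s_small; apply: s_not_small; rewrite (Hset_gt0 sH).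
  have [t [q [le_qt le_tk s_eq]]] := Hset_succ_large sH large.
  by rewrite s_eq in large *; apply: large_binomial_scaled.
split; first exact: large_ratio_Hset.
by case/andP=> _; rewrite leqNgt (large_ratio_gt _ s_large) // (leq_trans _ hk).
Qed.
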